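(* With the concrete categories defined in the context (all concrete over $\mathsf{Set}$ via the underlying-set functor), the following hold: (1) $\mathsf{Top}$ is concretely reflective in $\mathsf{PreTop}$; (2) $\mathsf{PreTop}$ is concretely reflective and concretely coreflective in $\mathsf{Filterbase}$; (3) $\mathsf{PreTop}$ is concretely coreflective in $\mathsf{Raster}$; (4) $\mathsf{Filterbase}$ is concretely coreflective in $\mathsf{Centered}$; (5) $\mathsf{Raster}$ is concretely reflective and concretely coreflective in $\mathsf{Centered}$.
   Context: A centered space is a set $X$ together with an assignment to each $x\in X$ of a nonempty collection $\nu(x)$ of subsets of $X$ such that $x\in N$ for all $N\in\nu(x)$. A function $f\colon X\to Y$ between centered spaces $(X,\nu_X),(Y,\nu_Y)$ is centered if for every $x\in X$ and every $M\in\nu_Y(f(x))$ there is $N\in\nu_X(x)$ with $f(N)\subseteq M$. $\mathsf{Centered}$ is the category of centered spaces and centered maps. A nonempty collection $\mathcal P$ of subsets of $X$ is a raster if (F0) every finite intersection $A_1\cap\cdots\cap A_n$ ($n\ge1$) of members is nonempty and (F1) $A\supseteq B\in\mathcal P\Rightarrow A\in\mathcal P$; a filterbase if (F0) and (F2) for $A,B\in\mathcal P$ there is $C\in\mathcal P$ with $C\subseteq A\cap B$; a filter if (F0),(F1),(F2). $\mathsf{Raster}$, $\mathsf{Filterbase}$, $\mathsf{PreTop}$ are the full subcategories of $\mathsf{Centered}$ whose objects have every $\nu(x)$ a raster, a filterbase, a filter, respectively. $\mathsf{Top}$ is the full subcategory of $\mathsf{PreTop}$ consisting of those $(X,\nu)$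 for which there is a topology $\tau$ on $X$ such that, for every $x$, $\nu(x)$ is the set of all $A\subseteq X$ containing some $U\in\tau$ with $x\in U$. For a concrete category $\mathsf C$ and a full concrete subcategory $\mathsf C'$: $\mathsf C'$ is concretely reflective in $\mathsf C$ if for each object $C$ of $\mathsf C$ there is an object $C'$ of $\mathsf C'$ with the same underlying set such that the identity map $C\to C'$ is a morphism and every morphism from $C$ to an object $D$ of $\mathsf C'$ is also a morphism $C'\to D$ (with the same underlying function); $\mathsf C'$ is concretely coreflective in $\mathsf C$ if for each $C$ there is $C'$ in $\mathsf C'$ with the same underlying set such that the identity map $C'\to C$ is a morphism and every morphism from an object $D$ of $\mathsf C'$ to $C$ is also a morphism $D\to C'$. *)

From Stdlib Require Import List.
Import ListNotations.
Set Implicit Arguments.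

Definition Nbhd (X : Type) := X -> (X -> Prop) -> Prop.

Definition is_centered (X : Type) (nu : Nbhd X) : Prop :=
  forall x, (exists N, nu x N) /\ (forall N, nu x N -> N x).

Definition centered_map (X Y : Type) (nuX : Nbhd X) (nuY : Nbhd Y) (f : X -> Y) : Prop :=
  forall x (M : Y -> Prop), nuY (f x) M ->
    exists N, nuX x N /\ (forall y, N y -> M (f y)).

Definition F0 (X : Type) (P : (X -> Prop) -> Prop) : Prop :=
  forall l : list (X -> Prop), l <> [] -> Forall P l ->
    exists x, Forall (fun A => A x) l.
Definition F1 (X : Type) (P : (X -> Prop) -> Prop) : Prop :=
  forall A B : X -> Prop, P B -> (forall x, B x -> A x) -> P A.
Definition F2 (X : Type) (P : (X -> Prop) -> Prop) : Prop :=
  forall A B, P A -> P B -> exists C, P C /\ (forall x, C x -> A x /\ B x).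
Definition nonempty_coll (X : Type) (P : (X -> Prop) -> Prop) : Prop :=
  exists A, P A.

Definition is_raster X (P : (X -> Prop) -> Prop) := nonempty_coll P /\ F0 P /\ F1 P.
Definition is_filterbase X (P : (X -> Prop) -> Prop) := nonempty_coll P /\ F0 P /\ F2 P.
Definition is_filter X (P : (X -> Prop) -> Prop) := nonempty_coll P /\ F0 P /\ F1 P /\ F2 P.

Definition SpaceClass := forall X : Type, Nbhd X -> Prop.

Definition Centered : SpaceClass := fun X nu => is_centered nu.
Definition Raster : SpaceClass := fun X nu => is_centered nu /\ forall x, is_raster (nu x).
Definition Filterbase : SpaceClass :=
  fun X nu => is_centered nu /\ forall x, is_filterbase (nu x).
Definition PreTop : SpaceClass := fun X nu => is_centered nu /\ forall x, is_filter (nu x).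

Definition is_topology (X : Type) (tau : (X -> Prop) -> Prop) : Prop :=
  tau (fun _ => False) /\ tau (fun _ => True) /\
  (forall U V, tau U -> tau V -> tau (fun x => U x /\ V x)) /\
  (forall F : (X -> Prop) -> Prop, (forall U, F U -> tau U) ->
      tau (fun x => exists U, F U /\ U x)).

Definition Top : SpaceClass := fun X nu =>
  PreTop nu /\
  exists tau, is_topology tau /\
    forall x (A : X -> Prop),
      nu x A <-> exists U, tau U /\ U x /\ (forall y, U y -> A y).

(* Concrete (co)reflectivity of the full subcategory C' in C
   (morphisms are centered maps, identity carried by id). *)
Definition concretely_reflective (C' C : SpaceClass) : Prop :=
  forall (X : Type) (nu : Nbhd X), C X nu ->
    exists nu' : Nbhd X, C' X nu' /\ centered_map nu nu' (fun x => x) /\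
      forall (Y : Type) (mu : Nbhd Y) (f : X -> Y),
        C' Y mu -> centered_map nu mu f -> centered_map nu' mu f.

Definition concretely_coreflective (C' C : SpaceClass) : Prop :=
  forall (X : Type) (nu : Nbhd X), C X nu ->
    exists nu' : Nbhd X, C' X nu' /\ centered_map nu' nu (fun x => x) /\
      forall (Y : Type) (mu : Nbhd Y) (f : Y -> X),
        C' Y mu -> centered_map mu nu f -> centered_map mu nu' f.

(* The upper closure of nu is isomorphic to nu in Centered
   (both identity maps are centered), so it is at once the reflection and the
   coreflection into every class containing it: Raster in Centered, and PreTop
   in Filterbase since the upper closure of a filterbase is a filter.  The
   filter generated by finite intersections receives a centered map from any
   space whose neighbourhood systems are filterbases, which gives the
   coreflections into PreTop and Filterbase.  Finally, for a pretopology, the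
   sets that are neighbourhoods of each of their points form a topology; its
   neighbourhood filters give the reflection into Top, because preimages of
   open sets under centered maps are again such sets. *)

From Stdlib Require Import List.
Import ListNotations.
Set Implicit Arguments.

Definition upper_closure X (nu : Nbhd X) : Nbhd X :=
  fun x A => exists N, nu x N /\ forall y, N y -> A y.

Definition finite_meets X (nu : Nbhd X) : Nbhd X :=
  fun x A => exists l, l <> [] /\ Forall (nu x) l /\
    forall y, Forall (fun B : X -> Prop => B y) l -> A y.

Definition topology_nbhds X (tau : (X -> Prop) -> Prop) : Nbhd X :=
  fun x A => exists U, tau U /\ U x /\ forall y, U y -> A y.

Definition nbhd_open_sets X (nu : Nbhd X) : (X -> Prop) -> Prop :=
  fun U => forall x, U x -> nu x U.

Lemma F0_of_common_point X (P : (X -> Prop) -> Prop) x :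
  (forall N, P N -> N x) -> F0 P.
Proof.
  intros Hx l _ Hl. exists x. eapply Forall_impl; [exact Hx|exact Hl].
Qed.

Lemma pretop_filterbase X (nu : Nbhd X) : PreTop nu -> Filterbase nu.
Proof.
  intros [Hc Hf]. split; [exact Hc|].
  intros x. destruct (Hf x) as [Hn [H0 [_ H2]]]. now split.
Qed.

Lemma centered_map_id X (nu : Nbhd X) : centered_map nu nu (fun x => x).
Proof. intros x M HM. now exists M. Qed.

Lemma upper_closure_raster X (nu : Nbhd X) : is_centered nu -> Raster (upper_closure nu).
Proof.
  intros Hc.
  assert (Hc' : is_centered (upper_closure nu)).
  { intros x. destruct (Hc x) as [[N HN] Hmem]. split.
    - exists N, N. auto.
    - intros A [K [HK HKA]]. apply HKA, Hmem, HK. }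
  split; [exact Hc'|]. intros x. destruct (Hc' x) as [Hn Hmem].
  split; [exact Hn|split].
  - exact (F0_of_common_point Hmem).
  - intros A B [K [HK HKB]] HBA. exists K. auto.
Qed.

Lemma upper_closure_pretop X (nu : Nbhd X) : Filterbase nu -> PreTop (upper_closure nu).
Proof.
  intros [Hc Hfb]. destruct (upper_closure_raster Hc) as [Hc' Hr].
  split; [exact Hc'|]. intros x. destruct (Hr x) as [Hn [H0 H1]].
  repeat split; [exact Hn|exact H0|exact H1|].
  intros A B [NA [HNA HA]] [NB [HNB HB]].
  destruct (Hfb x) as [_ [_ H2]]. destruct (H2 _ _ HNA HNB) as [C [HC HCAB]].
  exists C. split; [exists C; auto|].
  intros y Cy. destruct (HCAB y Cy). auto.
Qed.

Lemma centered_map_into_upper_closure X Y (mu : Nbhd Y) (nu : Nbhd X) (f : Y -> X) :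
  centered_map mu nu f -> centered_map mu (upper_closure nu) f.
Proof.
  intros Hf y M [N [HN HNM]]. destruct (Hf y N HN) as [K [HK HKN]].
  exists K. auto.
Qed.

Lemma centered_map_from_upper_closure X Y (nu : Nbhd X) (mu : Nbhd Y) (f : X -> Y) :
  centered_map nu mu f -> centered_map (upper_closure nu) mu f.
Proof.
  intros Hf x M HM. destruct (Hf x M HM) as [N [HN HNM]].
  exists N. split; [exists N; auto|exact HNM].
Qed.

Lemma upper_closure_reflective (C' C : SpaceClass) :
  (forall X (nu : Nbhd X), C X nu -> C' X (upper_closure nu)) ->
  concretely_reflective C' C.
Proof.
  intros HC' X nu HC. exists (upper_closure nu). split; [auto|split].
  - apply centered_map_into_upper_closure, centered_map_id.
  - intros Y mu f _. apply centered_map_from_upper_closure.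
Qed.

Lemma upper_closure_coreflective (C' C : SpaceClass) :
  (forall X (nu : Nbhd X), C X nu -> C' X (upper_closure nu)) ->
  concretely_coreflective C' C.
Proof.
  intros HC' X nu HC. exists (upper_closure nu). split; [auto|split].
  - apply centered_map_from_upper_closure, centered_map_id.
  - intros Y mu f _. apply centered_map_into_upper_closure.
Qed.

Lemma finite_meets_pretop X (nu : Nbhd X) : is_centered nu -> PreTop (finite_meets nu).
Proof.
  intros Hc.
  assert (Hc' : is_centered (finite_meets nu)).
  { intros x. destruct (Hc x) as [[N HN] Hmem]. split.
    - exists N, [N]. repeat split; [discriminate|now constructor|].
      intros y Hy. now inversion Hy.
    - intros A [l [_ [Hl HlA]]]. apply HlA.
      eapply Forall_impl; [exact Hmem|exact Hl]. }
  split; [exact Hc'|]. intros x. destruct (Hc' x) as [Hn Hmem].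
  repeat split; [exact Hn|exact (F0_of_common_point Hmem)| |].
  - intros A B [l [Hl0 [Hl HlB]]] HBA. exists l. auto.
  - intros A B [l1 [Hne [Hl1 H1]]] [l2 [_ [Hl2 H2]]].
    exists (fun y => A y /\ B y). split; [|auto].
    exists (l1 ++ l2). split; [|split].
    + now destruct l1.
    + now apply Forall_app.
    + intros z Hz. apply Forall_app in Hz as [Hz1 Hz2]. auto.
Qed.

Lemma centered_map_finite_meet X Y (mu : Nbhd Y) (nu : Nbhd X) (f : Y -> X) y :
  is_filterbase (mu y) -> centered_map mu nu f ->
  forall l, Forall (nu (f y)) l ->
  exists N, mu y N /\ forall z, N z -> Forall (fun B : X -> Prop => B (f z)) l.
Proof.
  intros [[N0 HN0] [_ H2]] Hf l. induction l as [|B l IH]; intros Hl.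
  - exists N0. auto.
  - inversion Hl as [|? ? HB Hl']; subst.
    destruct (IH Hl') as [N [HN HNl]]. destruct (Hf y B HB) as [K [HK HKB]].
    destruct (H2 _ _ HK HN) as [C [HC HCKN]]. exists C. split; [exact HC|].
    intros z Cz. destruct (HCKN z Cz). constructor; auto.
Qed.

Lemma centered_map_into_finite_meets X Y (mu : Nbhd Y) (nu : Nbhd X) (f : Y -> X) :
  Filterbase mu -> centered_map mu nu f -> centered_map mu (finite_meets nu) f.
Proof.
  intros [_ Hfb] Hf y M [l [_ [Hl HlM]]].
  destruct (centered_map_finite_meet y (Hfb y) Hf Hl) as [N [HN HNl]].
  exists N. auto.
Qed.

Lemma centered_map_finite_meets_id X (nu : Nbhd X) :
  centered_map (finite_meets nu) nu (fun x => x).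
Proof.
  intros x M HM. exists M. split; [|auto].
  exists [M]. repeat split; [discriminate|now constructor|].
  intros y Hy. now inversion Hy.
Qed.

Lemma finite_meets_coreflective (C' C : SpaceClass) :
  (forall X (nu : Nbhd X), C X nu -> is_centered nu) ->
  (forall X (nu : Nbhd X), PreTop nu -> C' X nu) ->
  (forall X (nu : Nbhd X), C' X nu -> Filterbase nu) ->
  concretely_coreflective C' C.
Proof.
  intros HC HPreTop HC' X nu Hnu. exists (finite_meets nu). repeat split.
  - apply HPreTop, finite_meets_pretop, (HC _ _ Hnu).
  - apply centered_map_finite_meets_id.
  - intros Y mu f Hmu. apply centered_map_into_finite_meets, (HC' _ _ Hmu).
Qed.

Lemma topology_nbhds_top X (tau : (X -> Prop) -> Prop) :
  is_topology tau -> Top (topology_nbhds tau).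
Proof.
  intros Htau. pose proof Htau as [_ [Htop [Hmeet _]]].
  assert (Hc : is_centered (topology_nbhds tau)).
  { intros x. split.
    - exists (fun _ => True), (fun _ => True). auto.
    - intros A [U [_ [Ux HUA]]]. auto. }
  split; [split; [exact Hc|]|exists tau; split; [exact Htau|reflexivity]].
  intros x. destruct (Hc x) as [Hn Hmem].
  repeat split; [exact Hn|exact (F0_of_common_point Hmem)| |].
  - intros A B [U [HU [Ux HUB]]] HBA. exists U. auto.
  - intros A B [U [HU [Ux HUA]]] [V [HV [Vx HVB]]].
    exists (fun y => U y /\ V y). split; [|intros y []; auto].
    exists (fun y => U y /\ V y). auto.
Qed.

Lemma nbhd_open_sets_topology X (nu : Nbhd X) : PreTop nu -> is_topology (nbhd_open_sets nu).
Proof.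
  intros [_ Hf]. repeat split.
  - intros x [].
  - intros x _. destruct (Hf x) as [[N HN] [_ [H1 _]]]. eapply H1; [exact HN|auto].
  - intros U V HU HV x [Ux Vx]. destruct (Hf x) as [_ [_ [H1 H2]]].
    destruct (H2 _ _ (HU x Ux) (HV x Vx)) as [C [HC HCUV]].
    eapply H1; [exact HC|exact HCUV].
  - intros F HF x [U [FU Ux]]. destruct (Hf x) as [_ [_ [H1 _]]].
    eapply H1; [exact (HF U FU x Ux)|]. intros y Uy. now exists U.
Qed.

Lemma preimage_nbhd_open X Y (nu : Nbhd X) (mu : Nbhd Y) (f : X -> Y) tau V :
  (forall x, F1 (nu x)) -> centered_map nu mu f ->
  (forall y A, mu y A <-> topology_nbhds tau y A) -> tau V ->
  nbhd_open_sets nu (fun x => V (f x)).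
Proof.
  intros H1 Hf Hmu HV x Vfx.
  assert (HmuV : mu (f x) V) by (apply Hmu; exists V; auto).
  destruct (Hf x V HmuV) as [N [HN HNV]]. eapply H1; [exact HN|exact HNV].
Qed.

Lemma top_reflective_pretop : concretely_reflective Top PreTop.
Proof.
  intros X nu Hnu. exists (topology_nbhds (nbhd_open_sets nu)). split; [|split].
  - apply topology_nbhds_top, nbhd_open_sets_topology, Hnu.
  - intros x M [U [HU [Ux HUM]]]. exists U. auto.
  - intros Y mu f [_ [tau [_ Hmu]]] Hf x M HM.
    apply Hmu in HM as [V [HV [Vfx HVM]]].
    assert (H1 : forall x, F1 (nu x)) by (intros z; apply Hnu).
    exists (fun z => V (f z)). split; [|auto].
    exists (fun z => V (f z)). repeat split; [|exact Vfx|auto].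
    exact (preimage_nbhd_open V H1 Hf Hmu HV).
Qed.

Theorem mainTheorem6 :
  concretely_reflective Top PreTop /\
  (concretely_reflective PreTop Filterbase /\ concretely_coreflective PreTop Filterbase) /\
  concretely_coreflective PreTop Raster /\
  concretely_coreflective Filterbase Centered /\
  (concretely_reflective Raster Centered /\ concretely_coreflective Raster Centered).
Proof.
  assert (Hraster : forall X (nu : Nbhd X), Centered nu -> Raster (upper_closure nu))
    by (intros X nu; apply upper_closure_raster).
  repeat split.
  - exact top_reflective_pretop.
  - apply upper_closure_reflective. intros X nu. apply upper_closure_pretop.
  - apply finite_meets_coreflective; [intros X nu []; auto|auto|exact pretop_filterbase].
  - apply finite_meets_coreflective; [intros X nu []; auto|auto|exact pretop_filterbase].
  - apply finite_meets_coreflective; [auto|exact pretop_filterbase|auto].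
  - exact (upper_closure_reflective _ _ Hraster).
  - exact (upper_closure_coreflective _ _ Hraster).
Qed.
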